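(* If $M,M'\in\mathrm{Mat}(2,\mathbb{Z})$ are conjugate via a matrix in $\mathrm{GL}(2,\mathbb{Z})$, then $\mathrm{mgcd}(M')=\mathrm{mgcd}(M)$. In particular, the matrix gcd is constant on the conjugacy classes of $\mathrm{GL}(2,\mathbb{Z})$.
   Context: For $M=\begin{pmatrix}a&b\\c&d\end{pmatrix}\in\mathrm{Mat}(2,\mathbb{Z})$, the matrix gcd is $\mathrm{mgcd}(M)=\gcd(b,c,d-a)$, taken as a non-negative integer, with $\mathrm{mgcd}(M)=0$ when $b=c=d-a=0$. *)

From mathcomp Require Import all_boot all_order all_algebra.
Set Implicit Arguments. Unset Strict Implicit. Unset Printing Implicit Defensive.
Import GRing.Theory Num.Theory.
Local Open Scope ring_scope.

(* Matrix gcd of M = [[a,b],[c,d]] : gcd(b, c, d - a), non-negative;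
   gcdz is non-negative and gcdz 0 0 = 0. *)
Definition mgcd (M : 'M[int]_2) : int :=
  gcdz (gcdz (M 0 1) (M 1 0)) (M 1 1 - M 0 0).

From mathcomp Require Import all_boot all_order all_algebra.
Import GRing.Theory Num.Theory.
Local Open Scope ring_scope.

(* An integer g divides mgcd M exactly when M is congruent to a scalar matrix
   modulo g. Conjugation fixes scalar matrices and, having integer entries,
   preserves entrywise divisibility by g, so conjugate matrices have the same
   divisors of their matrix gcd; both gcds are non-negative, hence equal. *)

Definition dvdmx (g : int) {m n} (A : 'M[int]_(m, n)) := forall i j, (g %| A i j)%Z.

Lemma dvdmx_mulmx g m n p q (B : 'M[int]_(m, n)) (A : 'M_(n, p)) (C : 'M_(p, q)) :
  dvdmx g A -> dvdmx g (B *m A *m C).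
Proof.
move=> gA i j; rewrite !mxE; apply: rpred_sum => k _.
rewrite !mxE big_distrl /=; apply: rpred_sum => l _.
exact/dvdz_mulr/dvdz_mull.
Qed.

Lemma dvdz_mgcd g M :
  (g %| mgcd M)%Z <-> exists c, dvdmx g (M - c%:M).
Proof.
rewrite /mgcd !dvdz_gcd; split.
  move=> /andP[/andP[g01 g10] g11]; exists (M 0 0) => i j; rewrite !mxE.
  have ord2 (k : 'I_2) : k = 0 \/ k = 1.
    by case: k => [[|[|//]]] ?; [left|right]; apply: val_inj.
  by case: (ord2 i) => ->; case: (ord2 j) => -> /=;
    rewrite ?subrr ?subr0 ?mulr0n ?mulr1n ?dvdz0.
case=> c gMc; have := gMc 0 1; have := gMc 1 0.
have := gMc 0 0; have := gMc 1 1; rewrite !mxE /= !mulr0n !mulr1n !subr0.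
by move=> g11 g00 -> ->; rewrite -(subrKA c) rpredD // -opprB rpredN.
Qed.

Lemma conjmx_sub_scalar (R : comUnitRingType) n (P M : 'M[R]_n) (c : R) :
  P \in unitmx ->
  invmx P *m M *m P - c%:M = invmx P *m (M - c%:M) *m P.
Proof.
move=> uP; rewrite mulmxBr mulmxBl; congr (_ - _).
by rewrite mul_mx_scalar -scalemxAl mulVmx // scalemx1.
Qed.

Lemma dvdz_mgcd_conj {g} {P M : 'M[int]_2} : P \in unitmx ->
  (g %| mgcd M)%Z -> (g %| mgcd (invmx P *m M *m P))%Z.
Proof.
move=> uP /dvdz_mgcd[c gMc]; apply/dvdz_mgcd; exists c.
by rewrite conjmx_sub_scalar //; apply: dvdmx_mulmx.
Qed.

Lemma gcdz_anti m n p q :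
  (gcdz m n %| gcdz p q)%Z -> (gcdz p q %| gcdz m n)%Z -> gcdz m n = gcdz p q.
Proof. by move=> d1 d2; congr Posz; apply/eqP; rewrite eqn_dvd; apply/andP. Qed.

Theorem lemma29 (M M' P : 'M[int]_2) :
  P \in unitmx -> M' = invmx P *m M *m P -> mgcd M' = mgcd M.
Proof.
move=> uP ->; apply: gcdz_anti; last exact: dvdz_mgcd_conj uP (dvdzz _).
have uPV : invmx P \in unitmx by rewrite unitmx_inv.
have := dvdz_mgcd_conj uPV (dvdzz (mgcd (invmx P *m M *m P))).
by rewrite invmxK !mulmxA mulmxV // mul1mx mulmxK.
Qed.
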